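(* Let $G=(V,E)$ be a graph on $n\geq 2d+1$ vertices with minimum degree $\delta(G)=d$. Suppose that $\deg(u)+\deg(v)\geq n+d-2$ for all pairs of distinct non-adjacent vertices $u,v$ of $G$. Then $G$ is rigid in $\mathbb{R}^d$.
   Context: A graph is rigid in $\mathbb{R}^d$ if some (equivalently every) generic $d$-dimensional bar-and-joint framework of it (vertex positions with coordinates algebraically independent over $\mathbb{Q}$) admits no continuous edge-length-preserving motion changing some pairwise distance between vertices. *)

From HB Require Import structures.
From mathcomp Require Import all_boot all_order all_algebra.
From mathcomp Require Import all_classical all_reals all_analysis.
Set Implicit Arguments. Unset Strict Implicit. Unset Printing Implicit Defensive.
Import Order.TTheory GRing.Theory Num.Theory numFieldNormedType.Exports.
Local Open Scope ring_scope.
Local Open Scope classical_set_scope.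

Definition simple_graph (T : finType) (e : rel T) : Prop :=
  symmetric e /\ irreflexive e.

Definition deg (T : finType) (e : rel T) (v : T) : nat := #|[set u | e v u]|.

Definition min_degree_eq (T : finType) (e : rel T) (d : nat) : Prop :=
  (forall v, (d <= deg e v)%N) /\ exists v, deg e v = d.

Definition sqdist (R : realType) (T : finType) (d : nat) (p : T -> 'I_d -> R)
  (u v : T) : R := \sum_(i < d) (p u i - p v i) ^+ 2.

(* the coordinates (p v i) are algebraically independent over Q: for any
   finite family of distinct coordinates (indexed injectively by f) no nonzero
   polynomial with rational coefficients vanishes on it.  A polynomial in k
   variables whose partial degrees are < N is given by its coefficient
   function q on exponent vectors m : 'I_k -> 'I_N (every polynomial has
   this form for N large enough), and q is the zero polynomial iff q = 0. *)
Definition generic (R : realType) (T : finType) (d : nat) (p : T -> 'I_d -> R)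
  : Prop :=
  forall (k N : nat) (f : 'I_k -> (T * 'I_d)%type), injective f ->
  forall q : {ffun {ffun 'I_k -> 'I_N} -> rat}, q != 0 ->
    \sum_(m : {ffun 'I_k -> 'I_N})
       (ratr (q m) : R) * \prod_(j < k) (p (f j).1 (f j).2) ^+ (m j) != 0.

Definition edge_motion (R : realType) (T : finType) (e : rel T) (d : nat)
  (p : T -> 'I_d -> R) (x : R -> T -> 'I_d -> R) : Prop :=
  x 0 = p /\
  (forall v i, {within [set t : R | 0 <= t <= 1], continuous ((fun t => x t v i) : R -> R)}) /\
  (forall t, 0 <= t <= 1 -> forall u v, e u v -> sqdist (x t) u v = sqdist p u v).

Definition framework_rigid (R : realType) (T : finType) (e : rel T) (d : nat)
  (p : T -> 'I_d -> R) : Prop :=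
  forall x, edge_motion e p x ->
    forall t, 0 <= t <= 1 -> forall u v, sqdist (x t) u v = sqdist p u v.

Definition rigid_in (R : realType) (T : finType) (e : rel T) (d : nat) : Prop :=
  exists p : T -> 'I_d -> R, generic p /\ framework_rigid e p.

From HB Require Import structures.
From mathcomp Require Import all_boot all_order all_algebra.
From mathcomp Require Import all_classical all_reals all_analysis.
From mathcomp Require Import ring lra zify polyrcf perm.
Set Implicit Arguments. Unset Strict Implicit. Unset Printing Implicit Defensive.
Import Order.TTheory GRing.Theory Num.Theory numFieldNormedType.Exports.
Local Open Scope ring_scope.

(* Fix a vertex u of degree d.  By the degree condition every vertex w <> u not
   adjacent to u has degree at least n - 2, so it is adjacent to all vertices but u
   and itself.  These n - 1 - d >= d vertices form a clique, each neighbour of u is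
   adjacent to all of them, and u is adjacent to its d neighbours.  Hence the graph
   grows from a clique by repeatedly adding a vertex joined to d vertices whose
   mutual distances a motion already preserves.
   Such a step preserves all distances to the new vertex z when the framework is
   generic: the d old points are then affinely independent, and the inner product
   <z - a_0, w - a_0> with any old vertex w is at all times a root of one fixed monic
   quadratic, hence constant by continuity.  Generic frameworks exist because the
   reals algebraic over finitely many given reals form a countable set. *)

(** * Gram matrices *)

Lemma det_block_schur (F : fieldType) m n (A : 'M[F]_m) (B : 'M[F]_(m, n))
    (C : 'M[F]_(n, m)) (D : 'M[F]_n) :
  A \in unitmx -> \det (block_mx A B C D) = \det A * \det (D - C *m invmx A *m B).
Proof.
move=> uA; set S := D - C *m invmx A *m B.
have -> : block_mx A B C D = block_mx 1%:M 0 (C *m invmx A) 1%:M *m block_mx A B 0 S.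
  by rewrite mulmx_block !mul1mx !mul0mx !addr0 -mulmxA mulVmx // mulmx1 addrC subrK.
by rewrite det_mulmx det_lblock det_ublock !det1 !mul1r.
Qed.

Lemma det_mx2 (F : comNzRingType) (M : 'M[F]_2) :
  \det M = M 0 0 * M 1 1 - M 0 1 * M 1 0.
Proof.
rewrite (expand_det_row _ 0) !big_ord_recl big_ord0 addr0 /cofactor !det_mx11 !mxE.
have lift01 : lift 0 0 = 1 :> 'I_2 by apply/val_inj.
have lift10 : lift 1 0 = 0 :> 'I_2 by apply/val_inj.
by rewrite /= lift01 lift10 expr0 expr1 !mul1r mulN1r mulrN.
Qed.

Lemma det_mul_tr_eq0 (F : fieldType) n d (M : 'M[F]_(n, d)) :
  (d < n)%N -> \det (M *m M^T) = 0.
Proof.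
move=> lt_dn; apply/eqP; apply: contraT; rewrite -unitfE -unitmxE => /mxrank_unit.
by move=> rkMMT; move: (mulmx_max_rank M M^T); rewrite rkMMT leqNgt lt_dn.
Qed.

Lemma mul_tr_rV_eq0 (R : realFieldType) n (u : 'rV[R]_n) : u *m u^T = 0 -> u = 0.
Proof.
move/matrixP/(_ 0 0); rewrite !mxE => /eqP; rewrite psumr_eq0; last first.
  by move=> k _; rewrite mxE -expr2 sqr_ge0.
move=> /allP u0; apply/matrixP => i k; rewrite (ord1 i) mxE.
by apply/eqP; have := u0 k (mem_index_enum _); rewrite mxE -expr2 sqrf_eq0.
Qed.

Lemma mul_tr_unitmx (R : realFieldType) m n (X : 'M[R]_(m, n)) :
  row_free X -> X *m X^T \in unitmx.
Proof.
move=> freeX; rewrite -row_free_unit; apply: inj_row_free => v vXXT0.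
have vX0 : v *m X = 0.
  by apply: mul_tr_rV_eq0; rewrite trmx_mul mulmxA -(mulmxA v) vXXT0 mul0mx.
by apply/eqP; rewrite -(mulmx_free_eq0 _ freeX) vX0.
Qed.

Lemma det_gram_block_eq0 (F : fieldType) m (A : 'M[F]_(m, m.+1)) (Z : 'M[F]_(2, m.+1)) :
  \det (block_mx (A *m A^T) (A *m Z^T) (Z *m A^T) (Z *m Z^T)) = 0.
Proof.
have : \det (col_mx A Z *m (col_mx A Z)^T) = 0 by rewrite det_mul_tr_eq0 ?addn2.
by rewrite tr_col_mx mul_col_mx !mul_mx_row.
Qed.

Section Gram.
Variables (R : realType) (T : finType) (d : nat).
Implicit Types (y : T -> 'I_d -> R) (o u v : T).

Definition gram y o u v : R := \sum_k (y u k - y o k) * (y v k - y o k).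

Lemma gramC y o u v : gram y o u v = gram y o v u.
Proof. by apply: eq_bigr => k _; rewrite mulrC. Qed.

Lemma sqdistC y u v : sqdist y u v = sqdist y v u.
Proof. by apply: eq_bigr => k _; rewrite -sqrrN opprB. Qed.

Lemma sqdistxx y u : sqdist y u u = 0.
Proof. by rewrite /sqdist big1 // => k _; rewrite subrr expr0n. Qed.

Lemma gram_polarization y o u v :
  gram y o u v = (sqdist y u o + sqdist y v o - sqdist y u v) / 2.
Proof. by rewrite /gram /sqdist -big_split -sumrB /= mulr_suml; apply: eq_bigr => k _; field. Qed.

Lemma gram_eq_sqdist y y' o u v :
  sqdist y u o = sqdist y' u o -> sqdist y v o = sqdist y' v o ->
  sqdist y u v = sqdist y' u v -> gram y o u v = gram y' o u v.
Proof. by move=> eq_uo eq_vo eq_uv; rewrite !gram_polarization eq_uo eq_vo eq_uv. Qed.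

Definition coord_mx y o n (vs : 'I_n -> T) : 'M[R]_(n, d) :=
  \matrix_(i, k) (y (vs i) k - y o k).

Lemma coord_mx_mul_tr y o n n' (vs : 'I_n -> T) (ws : 'I_n' -> T) i j :
  (coord_mx y o vs *m (coord_mx y o ws)^T) i j = gram y o (vs i) (ws j).
Proof. by rewrite !mxE; apply: eq_bigr => k _; rewrite !mxE. Qed.

End Gram.

Lemma gram_continuous (R : realType) (T : finType) (X : topologicalType) d
    (y : X -> T -> 'I_d -> R) (o u v : T) :
  (forall w k, continuous (fun t => y t w k)) ->
  continuous (fun t => gram (y t) o u v).
Proof.
move=> cont_y; have cont_diff w k : continuous (fun t => y t w k - y t o k).
  by move=> t; apply: continuousB; apply: cont_y.
apply: continuous_big => [|k _ t]; first exact: add_continuous.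
exact: (continuousM (cont_diff u k t) (cont_diff v k t)).
Qed.

(* The Gram matrix of the m + 2 vectors a_1 - a_0, ..., a_m - a_0, z - a_0, w - a_0
   of R^(m+1) is singular.  All its entries but <z - a_0, w - a_0> are fixed by the
   given distances, so the Schur complement of the invertible block of the a's turns
   its determinant into a monic quadratic in that entry. *)
Lemma gram_quadratic_constraint (R : realType) (T : finType) m
    (p : T -> 'I_m.+1 -> R) (a : 'I_m.+1 -> T) (z w : T) :
  row_free (coord_mx p (a ord0) (a \o lift ord0)) ->
  exists b c : R, forall y : T -> 'I_m.+1 -> R,
    (forall i j, sqdist y (a i) (a j) = sqdist p (a i) (a j)) ->
    (forall i, sqdist y z (a i) = sqdist p z (a i)) ->
    (forall i, sqdist y w (a i) = sqdist p w (a i)) ->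
    gram y (a ord0) z w ^+ 2 + b * gram y (a ord0) z w + c = 0.
Proof.
move=> freeA; set o := a ord0; set zw := tnth [tuple z; w].
set Ap := coord_mx p o (a \o lift ord0); set Zp := coord_mx p o zw.
set E := Zp *m Ap^T *m invmx (Ap *m Ap^T) *m (Ap *m Zp^T).
set cz := gram p o z z; set cw := gram p o w w.
exists (- (E 0 1 + E 1 0)), (E 0 1 * E 1 0 - (cz - E 0 0) * (cw - E 1 1)).
move=> y eq_aa eq_za eq_wa.
have eq_zwa j i : sqdist y (zw j) (a i) = sqdist p (zw j) (a i).
  by case: j => [[|[|]]].
set Ay := coord_mx y o (a \o lift ord0); set Zy := coord_mx y o zw.
have eq_AA : Ay *m Ay^T = Ap *m Ap^T.
  by apply/matrixP => i j; rewrite !coord_mx_mul_tr; apply: gram_eq_sqdist; apply: eq_aa.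
have eq_AZ : Ay *m Zy^T = Ap *m Zp^T.
  apply/matrixP => i j; rewrite !coord_mx_mul_tr.
  apply: gram_eq_sqdist; [exact: eq_aa | exact: eq_zwa |].
  by rewrite sqdistC eq_zwa sqdistC.
have eq_ZA : Zy *m Ay^T = Zp *m Ap^T.
  by rewrite -[Zy]trmxK -[Zp]trmxK -!trmx_mul eq_AZ.
have := det_gram_block_eq0 Ay Zy.
rewrite eq_AA eq_AZ eq_ZA det_block_schur ?mul_tr_unitmx // -/E => /eqP.
have detAA : \det (Ap *m Ap^T) != 0 by rewrite -unitfE -unitmxE mul_tr_unitmx.
have entry i j : (Zy *m Zy^T - E) i j = gram y o (zw i) (zw j) - E i j.
  by rewrite [LHS]mxE coord_mx_mul_tr [(- E) i j]mxE.
rewrite mulf_eq0 (negbTE detAA) /= det_mx2 !entry.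
have [-> ->] : zw 0 = z /\ zw 1 = w by [].
have -> : gram y o z z = cz by apply: gram_eq_sqdist; rewrite ?sqdistxx ?eq_za.
have -> : gram y o w w = cw by apply: gram_eq_sqdist; rewrite ?sqdistxx ?eq_wa.
rewrite [gram y o w z]gramC => /eqP quad0.
by rewrite -[RHS]oppr0 -[X in _ = - X]quad0; ring.
Qed.

(** * Continuous roots of a quadratic *)

Lemma monic_quadratic_factor (F : fieldType) (b c r r' x : F) : r != r' ->
  r ^+ 2 + b * r + c = 0 -> r' ^+ 2 + b * r' + c = 0 ->
  x ^+ 2 + b * x + c = (x - r) * (x - r').
Proof.
move=> neq_rr' root_r root_r'.
have sum_roots : r + r' + b = 0.
  have : (r - r') * (r + r' + b) = (r ^+ 2 + b * r + c) - (r' ^+ 2 + b * r' + c).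
    by ring.
  by rewrite root_r root_r' subrr => /eqP; rewrite mulf_eq0 subr_eq0 (negbTE neq_rr') => /eqP.
have prod_roots : c = r * r'.
  have : c - r * r' = (r ^+ 2 + b * r + c) - r * (r + r' + b) by ring.
  by rewrite root_r sum_roots mulr0 subrr => /eqP; rewrite subr_eq0 => /eqP.
by rewrite prod_roots -(addr0_eq sum_roots); ring.
Qed.

Section ContinuousRoots.
Local Open Scope classical_set_scope.

(* Otherwise, by the intermediate value theorem, s takes the midpoint of two distinct
   roots, which is not a root. *)
Lemma continuous_quadratic_root_const (R : realType) (s : R -> R) (b c : R) :
  {within [set t : R | 0 <= t <= 1], continuous s} ->
  (forall t, 0 <= t <= 1 -> s t ^+ 2 + b * s t + c = 0) ->
  forall t, 0 <= t <= 1 -> s t = s 0.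
Proof.
move=> cont_s root_s t /andP[t_ge0 t_le1]; apply/eqP; apply: contraT => neq_st.
have cont_s0t : {within `[0, t], continuous s}.
  apply: continuous_subspaceW cont_s => u /=; rewrite in_itv /= => /andP[u_ge0 u_let].
  by rewrite u_ge0 (le_trans u_let t_le1).
have mid_between : Num.min (s 0) (s t) <= (s t + s 0) / 2 <= Num.max (s 0) (s t).
  rewrite ge_min le_max; case: (leP (s t) (s 0)) => [st_le|/ltW st_le].
    by rewrite !(midf_le st_le) orbT.
  by rewrite addrC !(midf_le st_le) orbT.
have [u] := IVT t_ge0 cont_s0t mid_between; rewrite in_itv /= => /andP[u_ge0 u_let] su.
have := root_s u; rewrite u_ge0 (le_trans u_let t_le1) su => /(_ isT).
rewrite (monic_quadratic_factor _ neq_st (root_s t _) (root_s 0 _)) ?t_ge0 ?t_le1 ?lexx ?ler01 //.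
by move/eqP; rewrite mulf_eq0 !subr_eq0 => /orP[] /eqP mid_eq; move/eqP: neq_st; lra.
Qed.
End ContinuousRoots.

(** * Generic frameworks *)

Lemma generic_monomials_neq0 (R : realType) (T : finType) d (p : T -> 'I_d -> R)
    (V : finType) (f : V -> T * 'I_d) N (I : finType)
    (c : I -> rat) (M : I -> {ffun V -> 'I_N}) (i0 : I) :
  generic p -> injective f -> injective M -> c i0 != 0 ->
  \sum_i ratr (c i) * \prod_(v : V) p (f v).1 (f v).2 ^+ M i v != 0.
Proof.
move=> gen_p inj_f inj_M ci0.
pose M' i : {ffun 'I_#|V| -> 'I_N} := [ffun l => M i (enum_val l)].
have inj_M' : injective M'.
  move=> i j /ffunP eqM'; apply: inj_M; apply/ffunP => v.
  by have := eqM' (enum_rank v); rewrite !ffunE enum_rankK.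
pose q := [ffun m => \sum_i if m == M' i then c i else 0].
have q_M' i : q (M' i) = c i.
  by rewrite ffunE (bigD1 i) //= eqxx big1 ?addr0 // => j /negbTE; rewrite (inj_eq inj_M') eq_sym => ->.
have q_neq0 : q != 0 by apply: contra_neq ci0 => q0; rewrite -q_M' q0 ffunE.
have := gen_p _ _ _ (inj_comp inj_f enum_val_inj) _ q_neq0; congr (_ != 0).
under eq_bigr do rewrite ffunE rmorph_sum mulr_suml.
rewrite exchange_big; apply: eq_bigr => i _ /=.
under eq_bigr do rewrite (fun_if ratr) rmorph0 (fun_if (fun x => x * _)) mul0r.
rewrite -big_mkcond /= big_pred1_eq; congr (_ * _).
under eq_bigr do rewrite ffunE.
by rewrite -(big_enum_val (fun v => p (f v).1 (f v).2 ^+ M i v)).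
Qed.

Section HomogeneousProjection.
Variables (R : realType) (T : finType) (m : nat) (p : T -> 'I_m.+1 -> R).

(* Its determinant is a signed sum of distinct monomials in the coordinates of p, hence
   nonzero when p is generic; this makes the projections of the a j to their first m
   coordinates affinely independent. *)
Definition homog_proj_mx (a : 'I_m.+1 -> T) : 'M[R]_m.+1 :=
  \matrix_(j, k) if k == ord_max then 1 else p (a j) k.

Lemma homog_proj_mx_det_neq0 (a : 'I_m.+1 -> T) :
  generic p -> injective a -> \det (homog_proj_mx a) != 0.
Proof.
move=> gen_p inj_a.
(* expo s is the exponent vector of the term of the determinant indexed by s. *)
pose expo (s : 'S_m.+1) : {ffun 'I_m.+1 * 'I_m.+1 -> 'I_2} :=
  [ffun jk => inord ((s jk.1 == jk.2) && (jk.2 != ord_max))].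
have expoE s j k : expo s (j, k) = (s j == k) && (k != ord_max) :> nat.
  by rewrite ffunE inordK // ltnS leq_b1.
have expo_eq s t j : expo s = expo t -> s j != ord_max -> t j = s j.
  move=> est sj_max; have := congr1 (fun g : {ffun _ -> 'I_2} => g (j, s j) : nat) est.
  by rewrite !expoE eqxx sj_max; case: eqP.
have inj_expo : injective expo.
  move=> s t est; apply/permP => j.
  have [sj_max|] := eqVneq (s j) ord_max; last by move/(expo_eq _ _ _ est).
  have [tj_max|] := eqVneq (t j) ord_max; first by rewrite sj_max tj_max.
  by move/(expo_eq _ _ _ (esym est)).
have inj_f : injective (fun jk : 'I_m.+1 * 'I_m.+1 => (a jk.1, jk.2)).
  by move=> [j k] [j' k'] [/inj_a -> ->].
have := generic_monomials_neq0 gen_p (c := fun s : 'S_m.+1 => (-1) ^+ s) (i0 := 1%g) inj_f inj_expo.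
rewrite odd_perm1 expr0 oner_neq0 => /(_ isT); congr (_ != 0).
apply: eq_bigr => s _; rewrite rmorph_sign; congr (_ * _).
rewrite (eq_bigr (fun jk => p (a jk.1) jk.2 ^+ expo s (jk.1, jk.2))) => [|[] //].
rewrite -(pair_bigA _ (fun j k => p (a j) k ^+ expo s (j, k))) /=.
apply: eq_bigr => j _; rewrite (bigD1 (s j)) //= big1 ?mulr1 => [|k /negbTE]; last first.
  by rewrite expoE eq_sym => ->.
by rewrite expoE mxE eqxx; case: (s j == ord_max).
Qed.

Lemma homog_proj_mx_row_free_coord (a : 'I_m.+1 -> T) :
  homog_proj_mx a \in unitmx -> row_free (coord_mx p (a ord0) (a \o lift ord0)).
Proof.
move=> unitH; apply: inj_row_free => v vX0.
pose w : 'rV[R]_m.+1 := \row_j oapp (v 0) (- \sum_i v 0 i) (unlift ord0 j).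
have wH0 : w *m homog_proj_mx a = 0.
  apply/rowP => k; rewrite /w /homog_proj_mx !mxE big_ord_recl !mxE unlift_none /=.
  rewrite [X in _ + X](eq_bigr (fun i => v 0 i * (if k == ord_max then 1 else p (a (lift ord0 i)) k)));
    last by move=> i _; rewrite !mxE liftK.
  case: eqP => [_|_]; first by rewrite mulr1 (eq_bigr _ (fun i _ => mulr1 _)) addNr.
  have := congr1 (fun r : 'rV_m.+1 => r 0 k) vX0; rewrite !mxE => vXk.
  rewrite -[RHS]vXk /= mulNr mulr_suml -sumrN -big_split /=; apply: eq_bigr => i _.
  by rewrite !mxE mulrBr addrC.
have w0 : w = 0.
  by apply/eqP; rewrite -(mulmx_free_eq0 _ (_ : row_free (homog_proj_mx a))) ?row_free_unit ?wH0.
by apply/rowP => i; have := congr1 (fun r : 'rV_m.+1 => r 0 (lift ord0 i)) w0; rewrite !mxE liftK.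
Qed.
End HomogeneousProjection.

Lemma exists_ffun_neq0 (I : finType) (V : nmodType) (q : {ffun I -> V}) :
  q != 0 -> exists i, q i != 0.
Proof.
move=> q_neq0; apply/existsP; apply: contraNT q_neq0 => /existsPn q0.
by apply/eqP/ffunP => i; rewrite ffunE; apply/eqP; rewrite -[_ == _]negbK q0.
Qed.

Definition ffun_insert k N (j0 : 'I_k.+1) (m : {ffun 'I_k -> 'I_N}) (e : 'I_N) :
  {ffun 'I_k.+1 -> 'I_N} := [ffun j => if unlift j0 j is Some j' then m j' else e].

Lemma ffun_insertK k N (j0 : 'I_k.+1) (m : {ffun 'I_k.+1 -> 'I_N}) :
  ffun_insert j0 [ffun j => m (lift j0 j)] (m j0) = m.
Proof. by apply/ffunP => j; rewrite ffunE; case: unliftP => [j' ->|->]; rewrite ?ffunE. Qed.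

Lemma sum_ffun_insert (V : nmodType) k N (j0 : 'I_k.+1) (F : {ffun 'I_k.+1 -> 'I_N} -> V) :
  \sum_m F m = \sum_(e < N) \sum_(m : {ffun 'I_k -> 'I_N}) F (ffun_insert j0 m e).
Proof.
rewrite pair_bigA /= (reindex (fun em => ffun_insert j0 em.2 em.1)) //.
exists (fun m : {ffun 'I_k.+1 -> 'I_N} => (m j0, [ffun j => m (lift j0 j)])) => [[e m] _ | m _] /=.
  by rewrite ffunE unlift_none; congr (_, _); apply/ffunP => j; rewrite !ffunE liftK.
exact: ffun_insertK.
Qed.

Lemma prod_ffun_insert (S : comPzSemiRingType) k N (j0 : 'I_k.+1) m e (x : 'I_k.+1 -> S) :
  \prod_j x j ^+ @ffun_insert k N j0 m e j = x j0 ^+ e * \prod_j x (lift j0 j) ^+ m j.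
Proof.
rewrite (bigD1_ord j0) //= ffunE unlift_none; congr (_ * _).
by apply: eq_bigr => j _; rewrite ffunE liftK.
Qed.

Lemma coef_sum_polyC_Xn (S : nzSemiRingType) N (c : 'I_N -> S) (e : 'I_N) :
  (\sum_(i < N) (c i)%:P * 'X^i)`_e = c e.
Proof.
rewrite coef_sum (bigD1 e) //= coefCM coefXn eqxx mulr1 big1 ?addr0 // => i neq_ie.
rewrite coefCM coefXn; case: eqP => [/val_inj eq_ei|]; last by rewrite mulr0.
by rewrite eq_ei eqxx in neq_ie.
Qed.

Section IndependentReals.
Variable R : realType.
Local Open Scope classical_set_scope.

Lemma realType_uncountable : ~ countable [set: R].
Proof.
move=> cntR; have : countable `[(0 : R), 1] by apply: sub_countable cntR; apply: subset_card_le.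
move/countable_lebesgue_measure0; rewrite lebesgue_measure_itv /= lte_fin ltr01 /=.
by rewrite oppr0 adde0 => /eqP; rewrite eqe oner_eq0.
Qed.

Definition eval_monomials k N (x : 'I_k -> R) (q : {ffun {ffun 'I_k -> 'I_N} -> rat}) : R :=
  \sum_m ratr (q m) * \prod_j x j ^+ m j.

(* A code (k, N, f, c) stands for the polynomial whose i-th coefficient is
   the rational polynomial c i evaluated at the entries s_(f j) of s. *)
Definition poly_code := {k : nat & {N : nat &
  ({ffun 'I_k -> nat} * {ffun 'I_N -> {ffun {ffun 'I_k -> 'I_N} -> rat}})%type}}.

Definition code_poly (s : seq R) (D : poly_code) : {poly R} :=
  let: existT k (existT N (f, c)) := D in
  \sum_(i < N) (eval_monomials (fun j => nth 0 s (f j)) (c i))%:P * 'X^i.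

Definition algebraic_over (s : seq R) : set R :=
  \bigcup_(D in [set: poly_code]) [set y | code_poly s D != 0 /\ root (code_poly s D) y].

Lemma algebraic_over_countable s : countable (algebraic_over s).
Proof.
apply: bigcup_countable => [|D _]; first exact: (countableP (T := (poly_code : countType))).
apply: finite_set_countable; have [->|nzP] := eqVneq (code_poly s D) 0.
  by apply: sub_finite_set (finite_set0 R) => y [].
apply: sub_finite_set (finite_seq (rootsR (code_poly s D))) => y [_ rootP].
by rewrite /= -(roots_on_rootsR nzP) rootP in_itv.
Qed.

Lemma exists_not_algebraic_over s : exists y, ~ algebraic_over s y.
Proof.
apply: contrapT => all_alg; apply: realType_uncountable.
apply: sub_countable (algebraic_over_countable s); apply: subset_card_le => y _.
by apply: contrapT => not_alg; apply: all_alg; exists y.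
Qed.

Fixpoint indep_seq (n : nat) : seq R :=
  if n is n'.+1 then rcons (indep_seq n') (xget 0 (fun y => ~ algebraic_over (indep_seq n') y))
  else [::].

Definition indep_real (n : nat) : R := nth 0 (indep_seq n.+1) n.

Lemma size_indep_seq n : size (indep_seq n) = n.
Proof. by elim: n => //= n IHn; rewrite size_rcons IHn. Qed.

Lemma nth_indep_seq n j : (j < n)%N -> nth 0 (indep_seq n) j = indep_real j.
Proof.
elim: n => // n IHn; rewrite ltnS leq_eqVlt => /orP[/eqP-> // | lt_jn] /=.
by rewrite nth_rcons size_indep_seq lt_jn IHn.
Qed.

Lemma indep_real_not_algebraic n : ~ algebraic_over (indep_seq n) (indep_real n).
Proof.
rewrite /indep_real /= nth_rcons size_indep_seq ltnn eqxx.
exact: (xgetPex 0 (exists_not_algebraic_over (indep_seq n))).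
Qed.

Definition coef_slice k N (j0 : 'I_k.+1) (q : {ffun {ffun 'I_k.+1 -> 'I_N} -> rat}) e :
  {ffun {ffun 'I_k -> 'I_N} -> rat} := [ffun m => q (ffun_insert j0 m e)].

Lemma eval_monomials_slice k N (j0 : 'I_k.+1) (x : 'I_k.+1 -> R) q :
  eval_monomials x q =
  (\sum_(e < N) (eval_monomials (x \o lift j0) (coef_slice j0 q e))%:P * 'X^e).[x j0].
Proof.
rewrite horner_sum /eval_monomials (sum_ffun_insert j0); apply: eq_bigr => e _.
rewrite hornerCM hornerXn mulr_suml; apply: eq_bigr => m _.
by rewrite prod_ffun_insert ffunE /=; ring.
Qed.

Lemma coef_slice_neq0 k N (j0 : 'I_k.+1) (q : {ffun {ffun 'I_k.+1 -> 'I_N} -> rat}) :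
  q != 0 -> exists e, coef_slice j0 q e != 0.
Proof.
case/exists_ffun_neq0 => m qm; exists (m j0); apply: contra_neq qm.
by move=> /ffunP/(_ [ffun j => m (lift j0 j)]); rewrite !ffunE ffun_insertK => <-.
Qed.

Lemma eval_monomials_indep_real k (f : 'I_k -> nat) N (q : {ffun {ffun 'I_k -> 'I_N} -> rat}) :
  injective f -> q != 0 -> eval_monomials (indep_real \o f) q != 0.
Proof.
elim: k f N q => [|k IHk] f N q inj_f q_neq0.
  have [m qm] := exists_ffun_neq0 q_neq0.
  rewrite /eval_monomials (big_pred1 m) ?big_ord0 ?mulr1 ?fmorph_eq0 // => m'.
  by apply/esym/eqP/ffunP => -[].
have [j0 _ max_j0] := @arg_maxnP _ ord0 xpredT f isT.
have f_lift_lt j : (f (lift j0 j) < f j0)%N.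
  by rewrite ltn_neqAle (inj_eq inj_f) eq_sym neq_lift; apply: max_j0.
have [e slice_e] := coef_slice_neq0 j0 q_neq0.
pose D : poly_code := existT _ k (existT _ N ([ffun j => f (lift j0 j)], [ffun e => coef_slice j0 q e])).
pose c e := eval_monomials (indep_real \o f \o lift j0) (coef_slice j0 q e).
have codeE : code_poly (indep_seq (f j0)) D = \sum_(e < N) (c e)%:P * 'X^e.
  apply: eq_bigr => e' _; rewrite ffunE; congr (_%:P * _); apply: eq_bigr => m' _.
  by congr (_ * _); apply: eq_bigr => j _; rewrite ffunE nth_indep_seq.
have code_neq0 : code_poly (indep_seq (f j0)) D != 0.
  apply: contra_neq (IHk _ _ _ (inj_comp inj_f (@lift_inj _ j0)) slice_e) => code0.
  by rewrite -/(c e) -(coef_sum_polyC_Xn c e) -codeE code0 coef0.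
rewrite (eval_monomials_slice j0) -codeE; apply/negP => /eqP root_code.
by apply: (@indep_real_not_algebraic (f j0)); exists D => //; split => //; apply/eqP.
Qed.
End IndependentReals.

Lemma exists_generic (R : realType) (T : finType) d : exists p : T -> 'I_d -> R, generic p.
Proof.
exists (fun v k => indep_real R (enum_rank (v, k))) => k N f inj_f q q_neq0.
have inj_rank : injective (fun j => val (enum_rank (f j))).
  by move=> i j /val_inj/enum_rank_inj/inj_f.
have := eval_monomials_indep_real R inj_rank q_neq0; congr (_ != 0).
by apply: eq_bigr => m _; congr (_ * _); apply: eq_bigr => j _ /=; case: (f j).
Qed.

(** * Rigid extension along a motion *)

Section Motions.
Variables (R : realType) (T : finType) (e : rel T).
Local Open Scope classical_set_scope.

Definition dists_preserved d (x : R -> T -> 'I_d -> R) (p : T -> 'I_d -> R) (S : {set T}) :=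
  forall t, 0 <= t <= 1 -> forall u v, u \in S -> v \in S -> sqdist (x t) u v = sqdist p u v.

Lemma dists_preserved_clique d (p : T -> 'I_d -> R) x (S : {set T}) :
  edge_motion e p x -> {in S &, forall v w, v != w -> e v w} -> dists_preserved x p S.
Proof.
move=> [_ [_ edge_x]] clique_S t t01 v w vS wS.
by have [->|neq_vw] := eqVneq v w; [rewrite !sqdistxx | apply/edge_x/clique_S].
Qed.

Lemma dists_preserved_setU1 m (p : T -> 'I_m.+1 -> R) x (S : {set T}) (a : 'I_m.+1 -> T) z :
  generic p -> edge_motion e p x -> injective a -> (forall i, a i \in S) ->
  (forall i, e z (a i)) -> dists_preserved x p S -> dists_preserved x p (z |: S).
Proof.
move=> gen_p [x0 [cont_x edge_x]] inj_a aS adj_z presS.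
have free_a : row_free (coord_mx p (a ord0) (a \o lift ord0)).
  by apply: homog_proj_mx_row_free_coord; rewrite unitmxE unitfE homog_proj_mx_det_neq0.
have dist_z w : w \in S -> forall t, 0 <= t <= 1 -> sqdist (x t) z w = sqdist p z w.
  move=> wS; have [b [c quad]] := gram_quadratic_constraint z w free_a.
  pose s t := gram (x t) (a ord0) z w.
  have root_s t : 0 <= t <= 1 -> s t ^+ 2 + b * s t + c = 0.
    by move=> t01; apply: quad => *; [apply: presS | apply: edge_x | apply: presS].
  have cont_s : {within [set t : R | 0 <= t <= 1], continuous s}.
    exact: (gram_continuous (y := fun t : subspace [set t : R | 0 <= t <= 1] => x t) cont_x).
  move=> t t01; have := continuous_quadratic_root_const cont_s root_s t01.
  rewrite /s x0 !gram_polarization (edge_x t t01 z (a ord0)) // (presS t t01 w (a ord0)) //.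
  lra.
move=> t t01 v w; rewrite !in_setU1 => /orP[/eqP->|vS] /orP[/eqP->|wS].
- by rewrite !sqdistxx.
- exact: dist_z.
- by rewrite sqdistC [RHS]sqdistC; apply: dist_z.
- exact: presS.
Qed.

Lemma dists_preserved_setU m (p : T -> 'I_m.+1 -> R) x (S A : {set T}) (a : 'I_m.+1 -> T) :
  generic p -> edge_motion e p x -> injective a -> (forall i, a i \in S) ->
  (forall z i, z \in A -> e z (a i)) -> dists_preserved x p S ->
  dists_preserved x p (A :|: S).
Proof.
move=> gen_p motion_x inj_a aS adj_A presS; rewrite -(set_enum A).
have : {subset enum A <= A} by move=> z; rewrite mem_enum.
elim: (enum A) => [|z s IHs] sA; first by rewrite finset.set_nil finset.set0U.
rewrite finset.set_cons -finset.setUA; apply: dists_preserved_setU1 gen_p motion_x inj_a _ _ _.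
- by move=> i; rewrite inE aS orbT.
- by move=> i; apply/adj_A/sA/mem_head.
- by apply: IHs => y ys; apply/sA; rewrite inE ys orbT.
Qed.
End Motions.

(** * Graphs satisfying the degree condition *)

Lemma exists_inj_in (T : finType) (A : {set T}) n :
  (n <= #|A|)%N -> exists a : 'I_n -> T, injective a /\ forall i, a i \in A.
Proof.
move=> le_nA; exists (fun i => enum_val (widen_ord le_nA i)); split => [i j|i].
  by move/enum_val_inj => /(congr1 val) /= /val_inj.
exact: enum_valP.
Qed.

Definition neighbours (T : finType) (e : rel T) (u : T) : {set T} := [set w | e u w].

Definition non_neighbours (T : finType) (e : rel T) (u : T) : {set T} :=
  [set w | (w != u) && ~~ e u w].

Lemma in_neighbours (T : finType) (e : rel T) u w : (w \in neighbours e u) = e u w.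
Proof. by rewrite inE. Qed.

Lemma in_non_neighbours (T : finType) (e : rel T) u w :
  (w \in non_neighbours e u) = (w != u) && ~~ e u w.
Proof. by rewrite inE. Qed.

Lemma degE (T : finType) (e : rel T) v : deg e v = #|neighbours e v|.
Proof. by apply: eq_card => w; rewrite [in RHS]inE; apply/idP/idP; rewrite in_setE. Qed.

Lemma setU1_neighbours_non_neighbours (T : finType) (e : rel T) u :
  u |: (neighbours e u :|: non_neighbours e u) = [set: T].
Proof. by apply/setP => w; rewrite !inE; case: eqP; case: (e u w). Qed.

Section OreCondition.
Variables (T : finType) (e : rel T) (d : nat).
Hypotheses (sym_e : symmetric e) (irr_e : irreflexive e).
Hypothesis ore : forall u v, u != v -> ~~ e u v -> (#|T| + d - 2 <= deg e u + deg e v)%N.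
Variable u : T.
Hypothesis deg_u : deg e u = d.

Lemma non_neighbours_adj w v : w \in non_neighbours e u -> v != w -> v != u -> e w v.
Proof.
rewrite in_non_neighbours => /andP[neq_wu nadj_uw] neq_vw neq_vu; apply: contraT => nadj_wv.
have neq_uw : u != w by rewrite eq_sym.
have := ore neq_uw nadj_uw; rewrite deg_u degE.
have : neighbours e w \subset ~: (v |: [set w; u]).
  apply/fintype.subsetP => y; rewrite in_neighbours !inE => e_wy.
  have /negbTE-> : y != w by apply: contraTneq e_wy => ->; rewrite irr_e.
  have /negbTE-> : y != u by apply: contraTneq e_wy => ->; rewrite sym_e.
  by have /negbTE-> : y != v by apply: contraTneq e_wy => ->.
move/subset_leq_card; have := cardsC (v |: [set w; u]).
rewrite cardsU1 cards2 !inE (negbTE neq_vw) (negbTE neq_vu) neq_wu /=; lia.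
Qed.

Lemma non_neighbours_clique : {in non_neighbours e u &, forall v w, v != w -> e v w}.
Proof.
move=> v w vW; rewrite in_non_neighbours => /andP[neq_wu _] neq_vw.
by apply: non_neighbours_adj; rewrite // eq_sym.
Qed.

Lemma neighbours_non_neighbours_adj z w :
  z \in neighbours e u -> w \in non_neighbours e u -> e z w.
Proof.
rewrite in_neighbours => adj_uz wW; rewrite sym_e; apply: non_neighbours_adj => //.
  by apply: contraTneq wW => <-; rewrite in_non_neighbours adj_uz andbF.
by apply: contraTneq adj_uz => ->; rewrite irr_e.
Qed.

Lemma card_non_neighbours : (2 * d + 1 <= #|T|)%N -> (d <= #|non_neighbours e u|)%N.
Proof.
have -> : non_neighbours e u = ~: (u |: neighbours e u).
  by apply/setP => w; rewrite !inE negb_or.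
have := cardsC (u |: neighbours e u); rewrite cardsU1 -degE deg_u in_neighbours irr_e /=.
lia.
Qed.
End OreCondition.

Theorem lemma4p2 (R : realType) (T : finType) (e : rel T) (d : nat) :
  simple_graph e ->
  (2 * d + 1 <= #|T|)%N ->
  min_degree_eq e d ->
  (forall u v : T, u != v -> ~~ e u v -> (#|T| + d - 2 <= deg e u + deg e v)%N) ->
  rigid_in R e d.
Proof.
move=> [sym_e irr_e] n_ge [_ [u deg_u]] ore.
have [p gen_p] := exists_generic R T d.
exists p; split => // x motion_x t t01 v w.
case: d => [|m] in p gen_p x motion_x n_ge deg_u ore *; first by rewrite /sqdist !big_ord0.
have [aW [inj_aW aW_non]] := exists_inj_in (card_non_neighbours irr_e deg_u n_ge).
have card_N : (m.+1 <= #|neighbours e u|)%N by rewrite -degE deg_u.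
have [aN [inj_aN aN_nbr]] := exists_inj_in card_N.
have pres_non := dists_preserved_clique motion_x (non_neighbours_clique sym_e irr_e ore deg_u).
have pres_NW := dists_preserved_setU gen_p motion_x inj_aW aW_non
  (fun z i zN => neighbours_non_neighbours_adj sym_e irr_e ore deg_u zN (aW_non i)) pres_non.
have aN_NW i : aN i \in neighbours e u :|: non_neighbours e u.
  by rewrite finset.in_setU aN_nbr.
have adj_u i : e u (aN i) by rewrite -in_neighbours.
have := dists_preserved_setU1 gen_p motion_x inj_aN aN_NW adj_u pres_NW.
by rewrite setU1_neighbours_non_neighbours => /(_ t t01 v w); apply; rewrite finset.in_setT.
Qed.
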